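(* Let $n\ge 1$ and $s\geq 3$ be integers. There exists a sudoku array of type $\mathrm{SA}(s,n)$ if and only if there exist $s-2$ mutually orthogonal sudoku solutions of order $n^2$.
   Context: A sudoku solution of order $n^2$ is an $n^2\times n^2$ Latin square on $n^2$ symbols in which, in addition, each symbol appears exactly once in each of the $n^2$ canonical $n\times n$ subsquares (the subsquares formed by rows $an,\dots,an+n-1$ and columns $bn,\dots,bn+n-1$, $0\le a,b\le n-1$). Two Latin squares of the same order are orthogonal if, upon superimposition, each ordered pair of symbols appears exactly once; a family is mutually orthogonal if its members are pairwise orthogonal. A sudoku array of type $\mathrm{SA}(s,n)$ is a $2s\times n^4$ array with entries from an alphabet of size $n$, whose rows are partitioned into $s$ bands of two rows each and labeled $(i,j)$, $1\le i\le s$, $j\in\{1,2\}$ (row $(i,j)$ is the $j$-th row of the $i$-th band). A set $T$ of $4$ rows is top-justified if whenever row $(i,2)\in T$ then also $(i,1)\in T$; it is sudoku top-justified if it is top-justified and moreover, for every $i\ge 3$, $(i,1)\in T$ implies $(i,2)\in T$. The requirement is: for every sudoku top-justified set $T$ of $4$ rows, the $4\times n^4$ subarray formed by the rows in $T$ contains each $4$-tuple over the alphabet exactly once as a column. *)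

From mathcomp Require Import all_boot.
Set Implicit Arguments. Unset Strict Implicit. Unset Printing Implicit Defensive.

Definition square (n : nat) := 'I_(n ^ 2) -> 'I_(n ^ 2) -> 'I_(n ^ 2).

Definition latin_square (n : nat) (L : square n) : Prop :=
  (forall (r x : 'I_(n ^ 2)), #|[set c | L r c == x]| = 1) /\
  (forall (c x : 'I_(n ^ 2)), #|[set r | L r c == x]| = 1).

Definition sudoku_solution (n : nat) (L : square n) : Prop :=
  latin_square L /\
  forall (a b : 'I_n) (x : 'I_(n ^ 2)),
    #|[set rc : 'I_(n ^ 2) * 'I_(n ^ 2) |
        [&& rc.1 %/ n == a, rc.2 %/ n == b & L rc.1 rc.2 == x]]| = 1.

Definition orthogonal (n : nat) (L1 L2 : square n) : Prop :=
  forall (p : 'I_(n ^ 2) * 'I_(n ^ 2)),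
    #|[set rc : 'I_(n ^ 2) * 'I_(n ^ 2) |
        (L1 rc.1 rc.2, L2 rc.1 rc.2) == p]| = 1.

Definition MOSS (k n : nat) : Prop :=
  exists F : 'I_k -> square n,
    (forall i, sudoku_solution (F i)) /\
    (forall i j : 'I_k, i != j -> orthogonal (F i) (F j)).

(* Rows of a sudoku array are labelled (i, j) with i : 'I_s (band, 0-indexed,
   so band i here is band i+1 of the paper) and j : 'I_2 (j = 0 is the first
   row of the band, j = 1 the second). *)
Definition row_label (s : nat) := ('I_s * 'I_2)%type.

Definition sarray (s n : nat) := row_label s -> 'I_(n ^ 4) -> 'I_n.

Definition top_justified (s : nat) (T : {set row_label s}) : Prop :=
  forall i : 'I_s, (i, ord_max : 'I_2) \in T -> (i, ord0 : 'I_2) \in T.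

(* paper: for every band i >= 3 (1-indexed), i.e. i >= 2 0-indexed *)
Definition sudoku_top_justified (s : nat) (T : {set row_label s}) : Prop :=
  top_justified T /\
  forall i : 'I_s, 2 <= i -> (i, ord0 : 'I_2) \in T -> (i, ord_max : 'I_2) \in T.

(* The subarray on rows T contains each |T|-tuple exactly once as a column:
   for every assignment g of symbols to the rows of T, exactly one column
   agrees with g on all rows of T. *)
Definition each_tuple_once (s n : nat) (A : sarray s n) (T : {set row_label s})
  : Prop :=
  forall g : {ffun row_label s -> 'I_n},
    #|[set c : 'I_(n ^ 4) | [forall r in T, A r c == g r]]| = 1.

Definition is_SA (s n : nat) (A : sarray s n) : Prop :=
  forall T : {set row_label s},
    #|T| = 4 -> sudoku_top_justified T -> each_tuple_once A T.

Definition SA_exists (s n : nat) : Prop := exists A : sarray s n, is_SA A.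

From mathcomp Require Import all_boot.
Set Implicit Arguments. Unset Strict Implicit. Unset Printing Implicit Defensive.

(* Read the two rows of a band as the base-n digits of a symbol in 'I_(n ^ 2).
   The sudoku top-justified 4-sets of rows are exactly the unions of two full
   bands and the sets made of the first rows of bands 1, 2 and a full band
   i >= 3.  For such a set, "each 4-tuple exactly once" says that a column is
   determined by the symbols of the two bands, resp. by the sudoku box (read
   off the high digits of bands 1, 2) and the symbol of band i.  So bands 1
   and 2 identify the n^4 columns with the cells of an n^2 x n^2 grid, every
   further band is a square on that grid, and the remaining conditions are
   exactly the row, column and box conditions of a sudoku solution and the
   pairwise orthogonality of these squares. *)

Lemma card_fibers1P (X Y : finType) (f : X -> Y) : #|X| = #|Y| ->
  (forall y, #|[set x | f x == y]| = 1) <-> injective f.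
Proof.
move=> cardXY; split=> [fibers x1 x2 eq_f | inj_f y].
  have /eqP/cards1P[z fiberE] := fibers (f x2).
  have in_fiber x : f x = f x2 -> x = z.
    by move=> fx; apply/set1P; rewrite -fiberE inE fx.
  by rewrite (in_fiber _ eq_f) (in_fiber _ erefl).
have [g fK gK] := inj_card_bij inj_f (eq_leq (esym cardXY)).
apply/eqP/cards1P; exists (g y); apply/setP=> x; rewrite !inE.
by apply/eqP/eqP=> [<-|->]; rewrite ?fK ?gK.
Qed.

Lemma card_leq_inj (X Y : finType) : #|X| <= #|Y| -> exists f : X -> Y, injective f.
Proof.
move=> leXY; exists (fun x => enum_val (widen_ord leXY (enum_rank x))).
by move=> x1 x2 /enum_val_inj /(congr1 val) /= /val_inj; apply: enum_rank_inj.
Qed.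

Lemma inj_swap_pair (X Y Z : Type) (f : X -> Y) (g : X -> Z) :
  injective (fun x => (f x, g x)) -> injective (fun x => (g x, f x)).
Proof. by move=> inj_fg x1 x2 [eq_g eq_f]; apply: inj_fg; rewrite eq_f eq_g. Qed.

Lemma inj_rowsP (X Y Z : Type) (f : X -> Y -> Z) :
  (forall x, injective (f x)) <-> injective (fun p : X * Y => (p.1, f p.1 p.2)).
Proof.
split=> [inj_f [x1 y1] [x2 y2] /= [<- /inj_f ->] // | inj_p x y1 y2 eq_f].
by move: (inj_p (x, y1) (x, y2)); rewrite /= eq_f => /(_ erefl) [].
Qed.

Lemma inj_colsP (X Y Z : Type) (f : X -> Y -> Z) :
  (forall y, injective (f^~ y)) <-> injective (fun p : X * Y => (p.2, f p.1 p.2)).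
Proof.
split=> [inj_f [x1 y1] [x2 y2] /= [<- /inj_f ->] // | inj_p y x1 x2 eq_f].
by move: (inj_p (x1, y) (x2, y)); rewrite /= eq_f => /(_ erefl) [].
Qed.

Lemma forall_in_set4 (T : finType) (a b c d : T) (P : pred T) :
  [forall r in [set a; b; c; d], P r] = [&& P a, P b, P c & P d].
Proof.
apply/forall_inP/and4P=> [H | [Pa Pb Pc Pd] r].
  by split; apply: H; rewrite !inE eqxx ?orbT.
by rewrite !inE -!orbA => /or4P[] /eqP->.
Qed.

Lemma card_set4 (T : finType) (a b c d : T) :
  uniq [:: a; b; c; d] -> #|[set a; b; c; d]| = 4.
Proof.
move=> abcd; rewrite -[4]/(size [:: a; b; c; d]) -(card_uniqP abcd).
by apply: eq_card => x; rewrite !inE -!orbA.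
Qed.

Lemma ord2P (j : 'I_2) : j = ord0 \/ j = ord_max.
Proof. by case: j => [[|[|]]] // ?; [left | right]; apply: val_inj. Qed.

Section Digits.
Variables (n : nat) (n_gt0 : 0 < n).

Lemma hi_subproof (v : 'I_(n ^ 2)) : v %/ n < n.
Proof. by rewrite ltn_divLR // mulnn. Qed.
Definition hi (v : 'I_(n ^ 2)) : 'I_n := Ordinal (hi_subproof v).

Definition lo (v : 'I_(n ^ 2)) : 'I_n := Ordinal (ltn_pmod v n_gt0).

Lemma of_digits_subproof (a b : 'I_n) : a * n + b < n ^ 2.
Proof.
rewrite -mulnn; apply: (@leq_trans (a.+1 * n)); first by rewrite mulSn addnC ltn_add2r.
by rewrite leq_mul2r ltn_ord orbT.
Qed.
Definition of_digits (a b : 'I_n) : 'I_(n ^ 2) := Ordinal (of_digits_subproof a b).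

Definition digit (j : 'I_2) (v : 'I_(n ^ 2)) : 'I_n := if j == ord0 then hi v else lo v.

Lemma hi_of_digits a b : hi (of_digits a b) = a.
Proof. by apply: val_inj; rewrite /= divnMDl // divn_small ?addn0. Qed.

Lemma lo_of_digits a b : lo (of_digits a b) = b.
Proof. by apply: val_inj; rewrite /= modnMDl modn_small. Qed.

Lemma of_digits_hi_lo v : of_digits (hi v) (lo v) = v.
Proof. by apply: val_inj; rewrite /= -divn_eq. Qed.

Lemma eq_of_digits a b a' b' : (of_digits a b == of_digits a' b') = (a == a') && (b == b').
Proof.
apply/eqP/andP=> [E | [/eqP-> /eqP->] //].
by move: (congr1 hi E) (congr1 lo E); rewrite !hi_of_digits !lo_of_digits => -> ->.
Qed.

Definition box_key (L : square n) (x : 'I_(n ^ 2) * 'I_(n ^ 2)) :=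
  (hi x.1, hi x.2, L x.1 x.2).

Lemma sudoku_solutionP (L : square n) : sudoku_solution L <->
  [/\ injective (fun x => (x.1, L x.1 x.2)), injective (fun x => (x.2, L x.1 x.2))
    & injective (box_key L)].
Proof.
have rowsE : (forall r v, #|[set c | L r c == v]| = 1) <->
             injective (fun x => (x.1, L x.1 x.2)).
  split=> [H | /inj_rowsP H r]; last exact/(card_fibers1P _ erefl).
  by apply/inj_rowsP => r; apply/(card_fibers1P _ erefl).
have colsE : (forall c v, #|[set r | L r c == v]| = 1) <->
             injective (fun x => (x.2, L x.1 x.2)).
  split=> [H | /(inj_colsP L) H c]; last exact/(card_fibers1P _ erefl).
  by apply/(inj_colsP L) => c; apply/(card_fibers1P _ erefl).
pose box_set (a b : 'I_n) (v : 'I_(n ^ 2)) := [set x : 'I_(n ^ 2) * 'I_(n ^ 2) |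
  [&& x.1 %/ n == a, x.2 %/ n == b & L x.1 x.2 == v]].
have boxesE : (forall a b v, #|box_set a b v| = 1) <-> injective (box_key L).
  have cardB : #|{: 'I_(n ^ 2) * 'I_(n ^ 2)}| = #|{: 'I_n * 'I_n * 'I_(n ^ 2)}|.
    by rewrite !card_prod !card_ord mulnn.
  have boxE a b v : box_set a b v = [set x | box_key L x == (a, b, v)].
    by apply/setP=> x; rewrite !inE !xpair_eqE andbA.
  split=> [H | /(card_fibers1P _ cardB) H a b v]; last by rewrite boxE.
  by apply/(card_fibers1P _ cardB) => -[[a b] v]; rewrite -boxE.
split=> [[[/rowsE rows /colsE cols] /boxesE boxes] // |].
by case=> /rowsE rows /colsE cols /boxesE boxes.
Qed.

Lemma orthogonalP (L1 L2 : square n) :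
  orthogonal L1 L2 <-> injective (fun x => (L1 x.1 x.2, L2 x.1 x.2)).
Proof. exact: card_fibers1P. Qed.

End Digits.

Section BandRows.
Variable m : nat.
Local Notation s := m.+2.

Definition band0 : 'I_s := lshift m (ord0 : 'I_2).
Definition band1 : 'I_s := lshift m (ord_max : 'I_2).
Definition square_band (k : 'I_m) : 'I_s := rshift 2 k.

Lemma band_cases (i : 'I_s) : [\/ i = band0, i = band1 | exists k, i = square_band k].
Proof.
case: (@split_ordP 2 m i) => [j -> | k ->]; last by constructor 3; exists k.
by case: (ord2P j) => ->; [constructor 1 | constructor 2].
Qed.

Lemma square_band_inj : injective square_band.
Proof. by move=> k l /(congr1 val) /= /addnI /val_inj. Qed.

Definition two_bands (i j : 'I_s) : {set row_label s} :=
  [set (i, ord0); (i, ord_max); (j, ord0); (j, ord_max)].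

Definition box_rows (i : 'I_s) : {set row_label s} :=
  [set (band0, ord0); (band1, ord0); (i, ord0); (i, ord_max)].

Lemma mem_two_bands i j r : (r \in two_bands i j) = (r.1 == i) || (r.1 == j).
Proof.
case: r => k l; rewrite !inE !xpair_eqE /=.
by case: (ord2P l) => ->; rewrite !andbT !andbF ?orbF.
Qed.

Lemma mem_box_rows i r :
  (r \in box_rows i) = [|| r == (band0, ord0), r == (band1, ord0) | r.1 == i].
Proof.
case: r => k l; rewrite !inE /= -!orbA; congr [|| _, _ | _].
by rewrite !xpair_eqE; case: (ord2P l) => ->; rewrite !andbT ?andbF ?orbF.
Qed.

Lemma card_two_bands i j : i != j -> #|two_bands i j| = 4.
Proof.
by move=> ij; apply: card_set4; rewrite /= !inE !xpair_eqE !eqxx (negbTE ij).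
Qed.

Lemma sudoku_top_justified_two_bands i j : sudoku_top_justified (two_bands i j).
Proof. by split=> k; rewrite !mem_two_bands. Qed.

Lemma card_box_rows k : #|box_rows (square_band k)| = 4.
Proof. by apply: card_set4; rewrite /= !inE !xpair_eqE !eqxx. Qed.

Lemma sudoku_top_justified_box_rows k : sudoku_top_justified (box_rows (square_band k)).
Proof.
split=> i; rewrite !mem_box_rows !xpair_eqE.
  by case/or3P=> [/andP[_ //] | /andP[_ //] | ->]; rewrite !orbT.
by case: (band_cases i) => [|| [l]] ->.
Qed.

Lemma sudoku_top_justified4_cases (T : {set row_label s}) :
  #|T| = 4 -> sudoku_top_justified T ->
  (exists i j, i != j /\ T = two_bands i j) \/ exists k, T = box_rows (square_band k).
Proof.
move=> cardT [top stj].
have full_square k j : (square_band k, j) \in T ->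
    (square_band k, ord0) \in T /\ (square_band k, ord_max) \in T.
  by case: (ord2P j) => -> Tkj; split=> //; [apply: stj | apply: top].
have two_bandsT i j : i != j -> (i, ord0) \in T -> (i, ord_max) \in T ->
    (j, ord0) \in T -> (j, ord_max) \in T -> T = two_bands i j.
  move=> ij Ti0 Ti1 Tj0 Tj1; apply/esym/eqP.
  rewrite eqEcard cardT card_two_bands // leqnn andbT.
  by apply/subsetP=> r; rewrite !inE -!orbA => /or4P[] /eqP->.
case: (pickP [pred k | (square_band k, ord0) \in T]) => [k /= Tk0 | no_square]; last first.
  left; exists band0, band1; split=> //; apply/eqP.
  rewrite eqEcard cardT card_two_bands // leqnn andbT.
  apply/subsetP=> -[i j] Tij; rewrite mem_two_bands /=.
  case: (band_cases i) Tij => [|| [k]] -> // /full_square[Tk0 _].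
  by have := no_square k; rewrite /= Tk0.
have [_ Tk1] := full_square k _ Tk0.
case: (pickP [pred l | (l != k) && ((square_band l, ord0) \in T)]) =>
    [l /andP[lk Tl0] | one_square].
  have kl : square_band k != square_band l.
    by apply: contra lk => /eqP/square_band_inj->.
  have [_ Tl1] := full_square l _ Tl0.
  by left; exists (square_band k), (square_band l); split=> //; apply: two_bandsT.
case: (boolP ((band0, ord_max) \in T)) => [T01 | T01].
  left; exists band0, (square_band k); split=> //.
  exact: two_bandsT (top _ T01) T01 Tk0 Tk1.
case: (boolP ((band1, ord_max) \in T)) => [T11 | T11].
  left; exists band1, (square_band k); split=> //.
  exact: two_bandsT (top _ T11) T11 Tk0 Tk1.
right; exists k; apply/eqP; rewrite eqEcard cardT card_box_rows leqnn andbT.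
apply/subsetP=> -[i j] Tij; rewrite mem_box_rows /= !xpair_eqE.
case: (band_cases i) Tij => [|| [l]] ->.
- by case: (ord2P j) => -> Tj; rewrite ?eqxx // Tj in T01.
- by case: (ord2P j) => -> Tj; rewrite ?eqxx ?orbT // Tj in T11.
- move=> /full_square[Tl0 _]; have := one_square l.
  by rewrite /= Tl0 andbT => /negbFE/eqP->.
Qed.

End BandRows.

Arguments band0 {m}.
Arguments band1 {m}.

Lemma each_tuple_onceP s n (A : sarray s n) (T : {set row_label s}) (Y : finType)
    (key : 'I_(n ^ 4) -> Y) (tuple_key : {ffun row_label s -> 'I_n} -> Y) :
  #|'I_(n ^ 4)| = #|Y| ->
  (forall (g : {ffun row_label s -> 'I_n}) c,
    [forall r in T, A r c == g r] = (key c == tuple_key g)) ->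
  (forall y, exists g, tuple_key g = y) ->
  each_tuple_once A T <-> injective key.
Proof.
move=> cardY keyE tuple_key_onto; rewrite /each_tuple_once.
split=> [once | /(card_fibers1P _ cardY) fibers g].
  apply/(card_fibers1P _ cardY) => y; have [g <-] := tuple_key_onto y.
  by apply: etrans (once g); apply: eq_card => c; rewrite !inE keyE.
by apply: etrans (fibers (tuple_key g)); apply: eq_card => c; rewrite !inE keyE.
Qed.

Section ArrayKeys.
Variables (m n : nat) (n_gt0 : 0 < n).
Local Notation s := m.+2.
Implicit Type A : sarray s n.

Definition band_symbol A (i : 'I_s) (c : 'I_(n ^ 4)) : 'I_(n ^ 2) :=
  of_digits (A (i, ord0) c) (A (i, ord_max) c).

Lemma each_tuple_once_two_bands A i j : i != j ->
  each_tuple_once A (two_bands i j) <->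
  injective (fun c => (band_symbol A i c, band_symbol A j c)).
Proof.
move=> ij; apply: (each_tuple_onceP
  (tuple_key := fun g => (of_digits (g (i, ord0)) (g (i, ord_max)),
                          of_digits (g (j, ord0)) (g (j, ord_max))))).
- by rewrite card_prod !card_ord -expnD.
- by move=> g c; rewrite forall_in_set4 xpair_eqE !(eq_of_digits n_gt0) !andbA.
move=> [u v]; exists [ffun r => digit n_gt0 r.2 (if r.1 == i then u else v)].
by rewrite !ffunE /= eqxx eq_sym (negbTE ij) /digit /= !of_digits_hi_lo.
Qed.

Lemma each_tuple_once_box_rows A k :
  each_tuple_once A (box_rows (square_band k)) <->
  injective (fun c => (A (band0, ord0) c, A (band1, ord0) c,
                       band_symbol A (square_band k) c)).
Proof.
apply: (each_tuple_onceP (tuple_key := fun g =>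
  (g (band0, ord0), g (band1, ord0),
   of_digits (g (square_band k, ord0)) (g (square_band k, ord_max))))).
- by rewrite !card_prod !card_ord mulnn -expnD.
- by move=> g c; rewrite forall_in_set4 !xpair_eqE (eq_of_digits n_gt0) !andbA.
move=> [[a b] v]; exists [ffun r => if r.1 == band0 then a else if r.1 == band1 then b
                                 else digit n_gt0 r.2 v].
by rewrite !ffunE /digit /= of_digits_hi_lo.
Qed.

Lemma is_SAP A : is_SA A <->
  (forall i j, i != j -> injective (fun c => (band_symbol A i c, band_symbol A j c))) /\
  (forall k, injective (fun c => (A (band0, ord0) c, A (band1, ord0) c,
                                  band_symbol A (square_band k) c))).
Proof.
split=> [A_SA | [bands boxes] T cardT stjT].
  split=> [i j ij | k].
    apply/each_tuple_once_two_bands=> //; apply: A_SA.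
      exact: card_two_bands.
    exact: sudoku_top_justified_two_bands.
  apply/each_tuple_once_box_rows; apply: A_SA.
    exact: card_box_rows.
  exact: sudoku_top_justified_box_rows.
case: (sudoku_top_justified4_cases cardT stjT) => [[i [j [ij ->]]] | [k ->]].
  exact/each_tuple_once_two_bands/bands.
exact/each_tuple_once_box_rows/boxes.
Qed.

End ArrayKeys.

Section SquaresOfArray.
Variables (m n : nat) (n_gt0 : 0 < n) (A : sarray m.+2 n).
Hypothesis A_SA : is_SA A.
Variable column : 'I_(n ^ 2) * 'I_(n ^ 2) -> 'I_(n ^ 4).
Hypothesis columnK : cancel column (fun c => (band_symbol A band0 c, band_symbol A band1 c)).

Definition array_square (k : 'I_m) : square n :=
  fun r c => band_symbol A (square_band k) (column (r, c)).

Lemma band0_column x : band_symbol A band0 (column x) = x.1.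
Proof. by rewrite -[in RHS](columnK x). Qed.

Lemma band1_column x : band_symbol A band1 (column x) = x.2.
Proof. by rewrite -[in RHS](columnK x). Qed.

Lemma hi_band0_column x : A (band0, ord0) (column x) = hi n_gt0 x.1.
Proof. by rewrite -band0_column hi_of_digits. Qed.

Lemma hi_band1_column x : A (band1, ord0) (column x) = hi n_gt0 x.2.
Proof. by rewrite -band1_column hi_of_digits. Qed.

Lemma band_symbol_column_inj i j : i != j ->
  injective (fun x => (band_symbol A i (column x), band_symbol A j (column x))).
Proof.
by move=> ij; apply: inj_comp (((is_SAP n_gt0 A).1 A_SA).1 _ _ ij) (can_inj columnK).
Qed.

Lemma array_square_sudoku k : sudoku_solution (array_square k).
Proof.
apply/sudoku_solutionP; split.
- apply: eq_inj (band_symbol_column_inj (i := band0) (j := square_band k) isT) _.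
  by case=> r c; rewrite /= band0_column.
- apply: eq_inj (band_symbol_column_inj (i := band1) (j := square_band k) isT) _.
  by case=> r c; rewrite /= band1_column.
apply: eq_inj (inj_comp (((is_SAP n_gt0 A).1 A_SA).2 k) (can_inj columnK)) _.
by case=> r c; rewrite /= hi_band0_column hi_band1_column.
Qed.

Lemma array_square_orth k l : k != l -> orthogonal (array_square k) (array_square l).
Proof.
move=> kl; apply/orthogonalP.
have kl' : square_band k != square_band l by apply: contra kl => /eqP/square_band_inj->.
by apply: eq_inj (band_symbol_column_inj kl') _; case.
Qed.

End SquaresOfArray.

Lemma SA_MOSS m n : 0 < n -> SA_exists m.+2 n -> MOSS m n.
Proof.
move=> n_gt0 [A A_SA].
have coords_inj := ((is_SAP n_gt0 A).1 A_SA).1 band0 band1 isT.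
have [column _ columnK] : bijective (fun c => (band_symbol A band0 c, band_symbol A band1 c)).
  by apply: inj_card_bij coords_inj _; rewrite card_prod !card_ord -expnD.
exists (array_square A column); split=> [k | k l].
  exact: (array_square_sudoku n_gt0 A_SA columnK k).
exact: (array_square_orth n_gt0 A_SA columnK).
Qed.

Section ArrayOfSquares.
Variables (m n : nat) (n_gt0 : 0 < n) (F : 'I_m -> square n).
Hypothesis F_sudoku : forall k, sudoku_solution (F k).
Hypothesis F_orth : forall k l, k != l -> orthogonal (F k) (F l).

Definition cell_symbol (i : 'I_m.+2) (x : 'I_(n ^ 2) * 'I_(n ^ 2)) : 'I_(n ^ 2) :=
  match @split 2 m i with
  | inl j => if j == ord0 then x.1 else x.2
  | inr k => F k x.1 x.2
  end.

Lemma cell_symbol_band0 x : cell_symbol band0 x = x.1.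
Proof. by rewrite /cell_symbol -[band0]/(unsplit (inl ord0)) unsplitK. Qed.

Lemma cell_symbol_band1 x : cell_symbol band1 x = x.2.
Proof. by rewrite /cell_symbol -[band1]/(unsplit (inl ord_max)) unsplitK. Qed.

Lemma cell_symbol_square k x : cell_symbol (square_band k) x = F k x.1 x.2.
Proof. by rewrite /cell_symbol -[square_band k]/(unsplit (inr k)) unsplitK. Qed.

Lemma cell_symbol_pair_inj i j : i != j ->
  injective (fun x => (cell_symbol i x, cell_symbol j x)).
Proof.
have coords : injective (fun x => (cell_symbol band0 x, cell_symbol band1 x)).
  by move=> x y; rewrite !cell_symbol_band0 !cell_symbol_band1 -!surjective_pairing.
have rows k : injective (fun x => (cell_symbol band0 x, cell_symbol (square_band k) x)).
  have [rowsF _ _] := (sudoku_solutionP n_gt0 _).1 (F_sudoku k).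
  by apply: eq_inj rowsF _ => x; rewrite cell_symbol_band0 cell_symbol_square.
have cols k : injective (fun x => (cell_symbol band1 x, cell_symbol (square_band k) x)).
  have [_ colsF _] := (sudoku_solutionP n_gt0 _).1 (F_sudoku k).
  by apply: eq_inj colsF _ => x; rewrite cell_symbol_band1 cell_symbol_square.
(* [//] closes the diagonal cases and those with [i] listed before [j]. *)
case: (band_cases i) => [|| [k]] ->; case: (band_cases j) => [|| [l]] -> // ij.
- exact: inj_swap_pair coords.
- exact: inj_swap_pair (rows k).
- exact: inj_swap_pair (cols k).
have kl : k != l by apply: contra ij => /eqP->.
apply: eq_inj ((orthogonalP _ _).1 (F_orth kl)) _ => x.
by rewrite !cell_symbol_square.
Qed.

Lemma cell_box_inj k :
  injective (fun x => (hi n_gt0 x.1, hi n_gt0 x.2, cell_symbol (square_band k) x)).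
Proof.
have [_ _ boxF] := (sudoku_solutionP n_gt0 _).1 (F_sudoku k).
by apply: eq_inj boxF _ => x; rewrite cell_symbol_square.
Qed.

Variable cell : 'I_(n ^ 4) -> 'I_(n ^ 2) * 'I_(n ^ 2).
Hypothesis cell_inj : injective cell.

Definition squares_array : sarray m.+2 n :=
  fun r c => digit n_gt0 r.2 (cell_symbol r.1 (cell c)).

Lemma band_symbol_squares_array i c : band_symbol squares_array i c = cell_symbol i (cell c).
Proof. exact: of_digits_hi_lo. Qed.

Lemma squares_array_SA : is_SA squares_array.
Proof.
apply/(is_SAP n_gt0); split=> [i j ij | k].
  apply: eq_inj (inj_comp (cell_symbol_pair_inj ij) cell_inj) _ => c.
  by rewrite /= !band_symbol_squares_array.
apply: eq_inj (inj_comp (@cell_box_inj k) cell_inj) _ => c.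
rewrite /= band_symbol_squares_array /squares_array /digit /=.
by rewrite cell_symbol_band0 cell_symbol_band1.
Qed.

End ArrayOfSquares.

Lemma MOSS_SA m n : 0 < n -> MOSS m n -> SA_exists m.+2 n.
Proof.
move=> n_gt0 [F [F_sudoku F_orth]].
have [cell cell_inj] : exists cell : 'I_(n ^ 4) -> 'I_(n ^ 2) * 'I_(n ^ 2), injective cell.
  by apply: card_leq_inj; rewrite card_prod !card_ord -expnD.
by exists (squares_array n_gt0 F cell); apply: squares_array_SA.
Qed.

Theorem theorem2p1 (n s : nat) (hn : 1 <= n) (hs : 3 <= s) :
  SA_exists s n <-> MOSS (s - 2) n.
Proof.
case: s hs => [|[|m]] // _; rewrite !subSS subn0.
by split; [apply: SA_MOSS | apply: MOSS_SA].
Qed.
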